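(* Let $L$ be a normalised lattice in $\mathrm{Osc}_1$, $\lambda=\lambda(L)$, $r=r(L)$, and let $s_0\in\mathbb N_{>0}$ be associated with the type of $L$ as follows: if $L$ is of type $L^1_{r_0}$, $s_0=r/r_0$; if $L$ is of type $L^{q,+}_r$ ($q\in\{2,3,4\}$), $s_0=1$ when $q=4$ and $r\in 2+4\mathbb Z$, and $s_0=q_0$ otherwise; if $L$ is of type $L^q_r$ with $q\in\{2,3,4,6\}$, $s_0=q_0$ when $q=4$ and $r\in2+4\mathbb Z$, and $s_0=1$ otherwise (here $q_0\in\{2,3\}$ is the smallest prime factor of $q$). Put $u=1/(s_0r\lambda)$. Then there is an inner automorphism $F$ of $\mathrm{Osc}_1$ with $F_u(L)=F(L)$.
   Context: $\mathrm{Osc}_1$ is the set $\mathbb C\times\mathbb R\times\mathbb R$ with multiplication $(\xi_1,z_1,t_1)(\xi_2,z_2,t_2)=(\xi_1+e^{it_1}\xi_2,\ z_1+z_2+\tfrac12\operatorname{Im}(\overline{\xi_1}e^{it_1}\xi_2),\ t_1+t_2)$; $H=\mathbb C\times\mathbb R\times\{0\}$ is the Heisenberg subgroup, with centre $Z(H)=\{0\}\times\mathbb R\times\{0\}$. For $u\in\mathbb R$, $F_u(\xi,z,t)=(\xi,z+ut,t)$ is an automorphism. For a lattice $L$ (discrete cocompact subgroup): $L\cap H$ is isomorphic to a discrete Heisenberg group $H_1^r(\mathbb Z)=\langle\alpha,\beta,\gamma\mid\alpha\beta\alpha^{-1}\beta^{-1}=\gamma^r,\gamma\text{ central}\rangle$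 for a unique $r=:r(L)$; the projection of $L$ to the last factor $\mathbb R$ is generated by a unique $\lambda(L)\in\pi\mathbb N_{>0}\cup\bigcup_{\lambda_0\in\{\pi/3,\pi/2,2\pi/3\}}(\lambda_0+2\pi\mathbb Z)$; $\operatorname{ord}(\lambda)$ is the least $q\ge1$ with $q\lambda\in2\pi\mathbb Z$. $L$ is normalised if the projection of $L\cap H$ to $H/Z(H)\cong\mathbb C\cong\mathbb R^2$ is a lattice of covolume one (equivalently $[L\cap H,L\cap H]$ is generated by $(0,1,0)$). As an abstract group $L$ is isomorphic to exactly one of the following groups, called its type: $H_1^r(\mathbb Z)\rtimes_S\mathbb Z\delta$ with $\delta x\delta^{-1}=S(x)$, $S(\gamma)=\gamma$ and $(S(\alpha),S(\beta))$ given by: $L^1_r$: $(\alpha,\beta)$; $L^2_r$: $(\alpha^{-1},\beta^{-1})$; $L^{2,+}_r$ ($r$ even): $(\alpha^{-1}\gamma,\beta^{-1}\gamma^{-1})$; $L^3_r$: $(\beta\gamma^r,\beta^{-1}\alpha^{-1})$; $L^{3,+}_r$ ($3\mid r$): $(\beta\gamma^{r-1},\beta^{-1}\alpha^{-1}\gamma)$; $L^4_r$: $(\beta,\alpha^{-1})$; $L^{4,+}_r$ ($r$ even): $(\beta\gamma,\alpha^{-1})$; $L^6_r$: $(\alpha\beta,\alpha^{-1})$. For types other than $L^1$ the index $r$ equals $r(L)$ and $q=\operatorname{ord}(\lambda(L))$ equals the superscript. *)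

From Stdlib Require Import Reals ZArith.
Open Scope R_scope.

(* Osc_1 = C x R x R, with xi = ox + i oy. *)
Record osc := mkOsc { ox : R; oy : R; oz : R; ot : R }.

(* (xi1,z1,t1)(xi2,z2,t2) = (xi1 + e^{it1} xi2, z1+z2+1/2 Im(conj xi1 e^{it1} xi2), t1+t2) *)
Definition omul (g h : osc) : osc :=
  let wx := cos (ot g) * ox h - sin (ot g) * oy h in
  let wy := sin (ot g) * ox h + cos (ot g) * oy h in
  mkOsc (ox g + wx) (oy g + wy)
        (oz g + oz h + / 2 * (ox g * wy - oy g * wx)) (ot g + ot h).

Definition oone : osc := mkOsc 0 0 0 0.

Definition oinv (g : osc) : osc :=
  mkOsc (- (cos (ot g) * ox g + sin (ot g) * oy g))
        (- (- sin (ot g) * ox g + cos (ot g) * oy g))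
        (- oz g) (- ot g).

Fixpoint onpow (g : osc) (n : nat) : osc :=
  match n with O => oone | S n => omul g (onpow g n) end.

Definition ozpow (g : osc) (k : Z) : osc :=
  match k with
  | Z0 => oone
  | Zpos p => onpow g (Pos.to_nat p)
  | Zneg p => onpow (oinv g) (Pos.to_nat p)
  end.

Definition commg (g h : osc) : osc := omul (omul g h) (omul (oinv g) (oinv h)).
Definition conjg (g x : osc) : osc := omul (omul g x) (oinv g).

Definition Fu (u : R) (g : osc) : osc := mkOsc (ox g) (oy g) (oz g + u * ot g) (ot g).

Definition onorm (g : osc) : R :=
  sqrt (ox g ^ 2 + oy g ^ 2 + oz g ^ 2 + ot g ^ 2).

Definition is_subgroup (L : osc -> Prop) : Prop :=
  L oone /\ (forall g h, L g -> L h -> L (omul g h)) /\ (forall g, L g -> L (oinv g)).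
Definition is_discrete (L : osc -> Prop) : Prop :=
  exists eps, 0 < eps /\ forall g, L g -> onorm g < eps -> g = oone.
(* G = K L with K bounded (equivalently compact closure) *)
Definition is_cocompact (L : osc -> Prop) : Prop :=
  exists M, forall g, exists k l, L l /\ onorm k <= M /\ g = omul k l.
Definition is_lattice (L : osc -> Prop) : Prop :=
  is_subgroup L /\ is_discrete L /\ is_cocompact L.

Definition LH (L : osc -> Prop) (g : osc) : Prop := L g /\ ot g = 0.

Inductive comm_gen (A : osc -> Prop) : osc -> Prop :=
| cg_one : comm_gen A oone
| cg_comm : forall g h x, A g -> A h -> comm_gen A x -> comm_gen A (omul (commg g h) x).

Definition normalised (L : osc -> Prop) : Prop :=
  forall x, comm_gen (LH L) x <-> exists n : Z, x = mkOsc 0 0 (IZR n) 0.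

Definition hword (a b c : osc) (p : Z * Z * Z) : osc :=
  match p with (i, j, k) => omul (ozpow a i) (omul (ozpow b j) (ozpow c k)) end.

(* L cap H is isomorphic to H_1^r(Z): generators satisfying the relations
   with unique normal forms a^i b^j c^k (von Dyck + normal form in H_1^r(Z)). *)
Definition heis_index (L : osc -> Prop) (r : nat) : Prop :=
  (0 < r)%nat /\
  exists a b c, LH L a /\ LH L b /\ LH L c /\
    omul c a = omul a c /\ omul c b = omul b c /\
    commg a b = ozpow c (Z.of_nat r) /\
    forall x, LH L x <-> exists! p : Z * Z * Z, x = hword a b c p.

Inductive osc_type :=
| T1 (r0 : nat) | T2 | T2p | T3 | T3p | T4 | T4p | T6.

(* index of the Heisenberg part of the type (r0 for L^1_{r0}, else r = r(L)) *)
Definition type_index (T : osc_type) (r : nat) : nat :=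
  match T with T1 r0 => r0 | _ => r end.

Definition type_cond (T : osc_type) (n : nat) : Prop :=
  match T with
  | T2p | T4p => Nat.even n = true
  | T3p => Nat.modulo n 3 = 0%nat
  | _ => True
  end.

Definition S_images (T : osc_type) (n : nat) (a b c : osc) : osc * osc :=
  let N := Z.of_nat n in
  match T with
  | T1 _ => (a, b)
  | T2 => (oinv a, oinv b)
  | T2p => (omul (oinv a) c, omul (oinv b) (oinv c))
  | T3 => (omul b (ozpow c N), omul (oinv b) (oinv a))
  | T3p => (omul b (ozpow c (N - 1)), omul (oinv b) (omul (oinv a) c))
  | T4 => (b, oinv a)
  | T4p => (omul b c, oinv a)
  | T6 => (omul a b, oinv a)
  end.

(* L is isomorphic (as abstract group) to H_n(Z) x|_S Z delta, expressed via
   images a,b,c,d of alpha,beta,gamma,delta satisfying the defining relations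
   and giving unique normal forms a^i b^j c^k d^m. *)
Definition has_type (L : osc -> Prop) (T : osc_type) (r : nat) : Prop :=
  let n := type_index T r in
  (0 < n)%nat /\ type_cond T n /\
  exists a b c d, L a /\ L b /\ L c /\ L d /\
    omul c a = omul a c /\ omul c b = omul b c /\ omul c d = omul d c /\
    commg a b = ozpow c (Z.of_nat n) /\
    conjg d a = fst (S_images T n a b c) /\
    conjg d b = snd (S_images T n a b c) /\
    forall x, L x <-> exists! p : Z * Z * Z * Z,
      x = match p with (i, j, k, m) => omul (hword a b c (i, j, k)) (ozpow d m) end.

Definition s0 (T : osc_type) (r : nat) : R :=
  match T with
  | T1 r0 => INR r / INR r0
  | T2p => 2
  | T3p => 3
  | T4p => if Nat.eqb (Nat.modulo r 4) 2 then 1 else 2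
  | T2 | T3 | T6 => 1
  | T4 => if Nat.eqb (Nat.modulo r 4) 2 then 2 else 1
  end.

From Stdlib Require Import Reals ZArith Lra Lia Psatz.
Open Scope R_scope.

(* As [F_u x = x (0, u t(x), 0)] and [t(L) = lam Z], the map [F_u]
   moves every element of [L] by a central element whose [z]-coordinate is a multiple of
   [1 / (s0 r)], whereas by normalisation the centre of [L cap H] is generated by [(0, +-1/r, 0)].
   When [s0 = 1] this already gives [F_u (L) = L].  Otherwise [F] is conjugation by a horizontal
   element [(eta, 0, 0)]: it shifts an element with trivial rotation centrally by
   [Im (conj eta xi)], and it moves [delta] by [(1 - e^{i t(delta)}) eta] in the [xi]-plane.
   For [L^{2,+}], [L^{3,+}], [L^4] and [L^{4,+}] we take [(1 - e^{i t(delta)}) eta = alpha]; the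
   relations [delta x delta^-1 = S(x)] then make conjugation by [eta] agree with [F_u] on the
   generators up to elements of [L].  For [L^1] the generator [delta] is central, every element
   of [L] rotates trivially, and [eta] is chosen to reproduce the shifts of [F_u] on [alpha] and
   [beta]; the shift of [delta] lies in [gamma^Z] because [s Im (conj alpha beta)] is an integer
   when [t(delta) = s lam], by a Bezout argument on the [t]-coordinates of the generators. *)

(** * The group law *)

Lemma sin_cos_sq t : sin t * sin t + cos t * cos t = 1.
Proof. pose proof (sin2_cos2 t) as E. unfold Rsqr in E. exact E. Qed.

Lemma eq_mod_sin_cos t P Q X :
  P - Q = (sin t * sin t + cos t * cos t - 1) * X -> P = Q.
Proof. rewrite sin_cos_sq. intro; lra. Qed.

Lemma omul_assoc g h k : omul (omul g h) k = omul g (omul h k).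
Proof.
  destruct g as [g1 g2 gz gt], h as [h1 h2 hz ht], k as [k1 k2 kz kt].
  unfold omul; simpl. rewrite cos_plus, sin_plus. f_equal; try ring.
  apply (eq_mod_sin_cos gt _ _
    (/2 * (h1 * cos ht * k2 + h1 * sin ht * k1 - h2 * cos ht * k1 + h2 * sin ht * k2))).
  ring.
Qed.

Lemma omul_oone_l g : omul oone g = g.
Proof. destruct g; unfold omul, oone; simpl. rewrite cos_0, sin_0. f_equal; ring. Qed.

Lemma omul_oone_r g : omul g oone = g.
Proof. destruct g; unfold omul, oone; simpl. f_equal; ring. Qed.

Lemma omul_oinv_l g : omul (oinv g) g = oone.
Proof.
  destruct g as [g1 g2 gz gt]; unfold omul, oinv, oone; simpl.
  rewrite cos_neg, sin_neg. f_equal; ring.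
Qed.

Lemma omul_oinv_r g : omul g (oinv g) = oone.
Proof.
  destruct g as [g1 g2 gz gt]; unfold omul, oinv, oone; simpl.
  f_equal; first [ring | apply (eq_mod_sin_cos gt _ _ (- g1)); ring
                   | apply (eq_mod_sin_cos gt _ _ (- g2)); ring].
Qed.

Lemma omul_cancel_l x y z : omul x y = omul x z -> y = z.
Proof.
  intro H. transitivity (omul (omul (oinv x) x) y).
  - rewrite omul_oinv_l, omul_oone_l. reflexivity.
  - rewrite omul_assoc, H, <- omul_assoc, omul_oinv_l, omul_oone_l. reflexivity.
Qed.

Lemma oinv_omul x y : oinv (omul x y) = omul (oinv y) (oinv x).
Proof.
  apply (omul_cancel_l (omul x y)).
  rewrite omul_oinv_r, omul_assoc, <- (omul_assoc y), omul_oinv_r, omul_oone_l, omul_oinv_r.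
  reflexivity.
Qed.

Lemma oinv_oinv x : oinv (oinv x) = x.
Proof. apply (omul_cancel_l (oinv x)). rewrite omul_oinv_r, omul_oinv_l. reflexivity. Qed.

Lemma oinv_commg x y : oinv (commg x y) = commg y x.
Proof. unfold commg. rewrite !oinv_omul, !oinv_oinv. reflexivity. Qed.

Lemma conjg_oone x : conjg oone x = x.
Proof.
  unfold conjg. replace (oinv oone) with oone by (unfold oinv, oone; simpl; f_equal; ring).
  rewrite omul_oone_l, omul_oone_r. reflexivity.
Qed.

Lemma conjg_of_commute y x : omul y x = omul x y -> conjg y x = x.
Proof. unfold conjg. intro H. rewrite H, omul_assoc, omul_oinv_r, omul_oone_r. reflexivity. Qed.

Lemma commute_of_conjg y x : conjg y x = x -> omul y x = omul x y.
Proof.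
  unfold conjg. intro H. rewrite <- H at 2. rewrite omul_assoc, omul_oinv_l, omul_oone_r.
  reflexivity.
Qed.

(** * Homomorphisms, images and generators *)

Definition is_hom (f : osc -> osc) : Prop := forall x y, f (omul x y) = omul (f x) (f y).

Section Hom.

Variable f : osc -> osc.
Hypothesis f_hom : is_hom f.

Lemma hom_oone : f oone = oone.
Proof.
  apply (omul_cancel_l (f oone)). rewrite <- f_hom, omul_oone_l, omul_oone_r. reflexivity.
Qed.

Lemma hom_oinv x : f (oinv x) = oinv (f x).
Proof.
  apply (omul_cancel_l (f x)). rewrite <- f_hom, !omul_oinv_r. exact hom_oone.
Qed.

Lemma hom_ozpow x k : f (ozpow x k) = ozpow (f x) k.
Proof.
  assert (Hn : forall y n, f (onpow y n) = onpow (f y) n).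
  { intros y n; induction n as [|n IH]; simpl; [exact hom_oone | rewrite f_hom, IH; reflexivity]. }
  destruct k; simpl; [exact hom_oone | apply Hn | rewrite Hn, hom_oinv; reflexivity].
Qed.

Lemma hom_word a b c d i j k m :
  f (omul (hword a b c (i, j, k)) (ozpow d m))
  = omul (hword (f a) (f b) (f c) (i, j, k)) (ozpow (f d) m).
Proof. unfold hword. rewrite !f_hom, !hom_ozpow. reflexivity. Qed.

End Hom.

Lemma conjg_hom g : is_hom (conjg g).
Proof.
  intros x y. unfold conjg. rewrite !omul_assoc. do 2 f_equal.
  rewrite <- (omul_assoc (oinv g)), omul_oinv_l, omul_oone_l. reflexivity.
Qed.

Lemma Fu_hom u : is_hom (Fu u).
Proof. intros [] []; unfold Fu, omul; simpl. f_equal; ring. Qed.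

Definition image (f : osc -> osc) (L : osc -> Prop) (y : osc) : Prop :=
  exists x, L x /\ y = f x.

Definition spanned_by (L : osc -> Prop) (a b c d : osc) : Prop :=
  forall x, L x -> exists i j k m, x = omul (hword a b c (i, j, k)) (ozpow d m).

Lemma is_subgroup_ozpow P x k : is_subgroup P -> P x -> P (ozpow x k).
Proof.
  intros [P1 [Pmul Pinv]] Hx.
  assert (Hn : forall y n, P y -> P (onpow y n)) by (intros y n Hy; induction n; simpl; auto).
  destruct k; simpl; auto.
Qed.

Lemma is_subgroup_word P a b c d i j k m :
  is_subgroup P -> P a -> P b -> P c -> P d -> P (omul (hword a b c (i, j, k)) (ozpow d m)).
Proof.
  intros HP Ha Hb Hc Hd. pose proof HP as [_ [Pmul _]].
  unfold hword. repeat apply Pmul; apply is_subgroup_ozpow; assumption.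
Qed.

Lemma spanned_all P L a b c d x :
  is_subgroup P -> spanned_by L a b c d -> P a -> P b -> P c -> P d -> L x -> P x.
Proof.
  intros HP Hspan Ha Hb Hc Hd Hx. destruct (Hspan x Hx) as [i [j [k [m ->]]]].
  apply is_subgroup_word; assumption.
Qed.

Lemma is_subgroup_fixed f : is_hom f -> is_subgroup (fun x => f x = x).
Proof.
  intro Hf. split; [|split].
  - apply hom_oone; exact Hf.
  - intros x y Hx Hy. rewrite Hf, Hx, Hy. reflexivity.
  - intros x Hx. rewrite hom_oinv, Hx by exact Hf. reflexivity.
Qed.

Lemma is_subgroup_image f L : is_hom f -> is_subgroup L -> is_subgroup (image f L).
Proof.
  intros Hf [L1 [Lmul Linv]]. split; [|split].
  - exists oone. split; [exact L1 | symmetry; exact (hom_oone f Hf)].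
  - intros _ _ [x [Hx ->]] [y [Hy ->]]. exists (omul x y). split; [auto | symmetry; apply Hf].
  - intros _ [x [Hx ->]]. exists (oinv x). split; [auto | symmetry; exact (hom_oinv f Hf x)].
Qed.

Lemma image_incl_of_generators L a b c d f h :
  is_subgroup L -> spanned_by L a b c d -> is_hom f -> is_hom h ->
  image h L (f a) -> image h L (f b) -> image h L (f c) -> image h L (f d) ->
  forall y, image f L y -> image h L y.
Proof.
  intros HL Hspan Hf Hh Ha Hb Hc Hd _ [x [Hx ->]].
  destruct (Hspan x Hx) as [i [j [k [m ->]]]].
  rewrite hom_word by exact Hf.
  apply is_subgroup_word; auto. apply is_subgroup_image; assumption.
Qed.

Lemma image_eq_of_generators L a b c d f h :
  is_subgroup L -> spanned_by L a b c d -> is_hom f -> is_hom h ->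
  image h L (f a) -> image h L (f b) -> image h L (f c) -> image h L (f d) ->
  image f L (h a) -> image f L (h b) -> image f L (h c) -> image f L (h d) ->
  forall y, image f L y <-> image h L y.
Proof.
  intros HL Hspan Hf Hh ? ? ? ? ? ? ? ? y.
  split; apply (image_incl_of_generators L a b c d); assumption.
Qed.

Lemma image_conjg_oone L y : image (conjg oone) L y <-> L y.
Proof.
  split.
  - intros [x [Lx ->]]. rewrite conjg_oone. exact Lx.
  - intro Ly. exists y. rewrite conjg_oone. auto.
Qed.

(** * Coordinates, central shifts and conjugation *)

Lemma ot_omul x y : ot (omul x y) = ot x + ot y.
Proof. reflexivity. Qed.

Lemma ot_oinv x : ot (oinv x) = - ot x.
Proof. reflexivity. Qed.

Lemma ot_ozpow x k : ot (ozpow x k) = IZR k * ot x.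
Proof.
  assert (Hn : forall y n, ot (onpow y n) = INR n * ot y).
  { intros y n; induction n as [|n IH]; simpl onpow; [simpl; ring|].
    rewrite S_INR, ot_omul, IH. ring. }
  destruct k; simpl ozpow; [simpl; ring | |]; rewrite Hn, INR_IPR; [reflexivity|].
  rewrite ot_oinv. change (IZR (Z.neg p)) with (- IPR p). ring.
Qed.

Lemma ot_conjg g x : ot (conjg g x) = ot x.
Proof. simpl. ring. Qed.

Lemma ot_commg x y : ot (commg x y) = 0.
Proof. simpl. ring. Qed.

Lemma mkOsc_eq_coords x1 x2 x3 x4 y :
  mkOsc x1 x2 x3 x4 = y -> x1 = ox y /\ x2 = oy y /\ x3 = oz y.
Proof. intros <-. repeat split. Qed.

(* [symp x y = Im (conj xi_x * xi_y)], the symplectic form on [H / Z(H)]. *)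
Definition symp (x y : osc) : R := ox x * oy y - oy x * ox y.

Definition trivial_rot (x : osc) : Prop := cos (ot x) = 1 /\ sin (ot x) = 0.

Lemma trivial_rot_H x : ot x = 0 -> trivial_rot x.
Proof. intro H. unfold trivial_rot. rewrite H, cos_0, sin_0. split; reflexivity. Qed.

Lemma omul_trivial_rot x y : trivial_rot x ->
  omul x y = mkOsc (ox x + ox y) (oy x + oy y) (oz x + oz y + / 2 * symp x y) (ot x + ot y).
Proof. intros [Hc Hs]. unfold omul, symp. rewrite Hc, Hs. f_equal; ring. Qed.

Lemma oinv_trivial_rot x : trivial_rot x -> oinv x = mkOsc (- ox x) (- oy x) (- oz x) (- ot x).
Proof. intros [Hc Hs]. unfold oinv. rewrite Hc, Hs. f_equal; ring. Qed.

Lemma is_subgroup_trivial_rot : is_subgroup trivial_rot.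
Proof.
  split; [|split].
  - apply trivial_rot_H. reflexivity.
  - intros x y [Hc Hs] [Hc' Hs']. unfold trivial_rot. simpl.
    rewrite cos_plus, sin_plus, Hc, Hs, Hc', Hs'. split; ring.
  - intros x [Hc Hs]. unfold trivial_rot. simpl. rewrite cos_neg, sin_neg, Hc, Hs. split; ring.
Qed.

Lemma ozpow_trivial_rot x k : trivial_rot x ->
  ozpow x k = mkOsc (IZR k * ox x) (IZR k * oy x) (IZR k * oz x) (IZR k * ot x).
Proof.
  intro Hx.
  assert (Hn : forall y n, trivial_rot y ->
            onpow y n = mkOsc (INR n * ox y) (INR n * oy y) (INR n * oz y) (INR n * ot y)).
  { intros y n Hy; induction n as [|n IH]; simpl onpow.
    - unfold oone. f_equal; simpl; ring.
    - rewrite omul_trivial_rot, IH, S_INR by exact Hy. unfold symp. simpl. f_equal; ring. }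
  destruct k; simpl ozpow.
  - unfold oone. f_equal; simpl; ring.
  - rewrite Hn, INR_IPR by exact Hx. reflexivity.
  - rewrite Hn, INR_IPR by (apply is_subgroup_trivial_rot; exact Hx).
    rewrite oinv_trivial_rot by exact Hx. change (IZR (Z.neg p)) with (- IPR p). simpl.
    f_equal; ring.
Qed.

Lemma hword_coords a b c i j k : trivial_rot a -> trivial_rot b -> trivial_rot c ->
  ox (hword a b c (i, j, k)) = IZR i * ox a + IZR j * ox b + IZR k * ox c /\
  oy (hword a b c (i, j, k)) = IZR i * oy a + IZR j * oy b + IZR k * oy c /\
  ot (hword a b c (i, j, k)) = IZR i * ot a + IZR j * ot b + IZR k * ot c.
Proof.
  intros Ha Hb Hc. unfold hword.
  rewrite !omul_trivial_rot by (apply is_subgroup_ozpow; auto using is_subgroup_trivial_rot).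
  rewrite !ozpow_trivial_rot by auto. simpl. repeat split; ring.
Qed.

Lemma word_coords a b c d i j k m :
  trivial_rot a -> trivial_rot b -> trivial_rot c -> trivial_rot d ->
  let x := omul (hword a b c (i, j, k)) (ozpow d m) in
  ox x = IZR i * ox a + IZR j * ox b + IZR k * ox c + IZR m * ox d /\
  oy x = IZR i * oy a + IZR j * oy b + IZR k * oy c + IZR m * oy d /\
  ot x = IZR i * ot a + IZR j * ot b + IZR k * ot c + IZR m * ot d.
Proof.
  intros Ha Hb Hc Hd x.
  destruct (hword_coords a b c i j k Ha Hb Hc) as [X [Y T]].
  assert (Hw : trivial_rot (hword a b c (i, j, k))).
  { pose proof is_subgroup_trivial_rot as [_ [Tmul _]].
    unfold hword. repeat apply Tmul; apply is_subgroup_ozpow; auto using is_subgroup_trivial_rot. }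
  unfold x. rewrite omul_trivial_rot, (ozpow_trivial_rot d) by assumption.
  cbn [ox oy oz ot]. rewrite X, Y, T. repeat split; ring.
Qed.

Lemma hword_00 a b c k : hword a b c (0%Z, 0%Z, k) = ozpow c k.
Proof. unfold hword. simpl ozpow. rewrite !omul_oone_l. reflexivity. Qed.

Definition Zc (w : R) : osc := mkOsc 0 0 w 0.

Definition shiftz (x : osc) (w : R) : osc := mkOsc (ox x) (oy x) (oz x + w) (ot x).

Lemma omul_Zc_r x w : omul x (Zc w) = shiftz x w.
Proof. destruct x; unfold omul, Zc, shiftz; simpl. f_equal; ring. Qed.

Lemma omul_Zc_l x w : omul (Zc w) x = shiftz x w.
Proof. destruct x; unfold omul, Zc, shiftz; simpl. rewrite cos_0, sin_0. f_equal; ring. Qed.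

Lemma oinv_Zc w : oinv (Zc w) = Zc (- w).
Proof.
  rewrite oinv_trivial_rot by (apply trivial_rot_H; reflexivity). unfold Zc; simpl. f_equal; ring.
Qed.

Lemma ozpow_Zc w k : ozpow (Zc w) k = Zc (IZR k * w).
Proof.
  rewrite ozpow_trivial_rot by (apply trivial_rot_H; reflexivity).
  unfold Zc; simpl. f_equal; ring.
Qed.

Lemma commg_trivial_rot x y : trivial_rot x -> trivial_rot y -> commg x y = Zc (symp x y).
Proof.
  intros Hx Hy. pose proof is_subgroup_trivial_rot as [_ [Tmul Tinv]].
  unfold commg.
  rewrite (omul_trivial_rot (omul x y)), (omul_trivial_rot x), (omul_trivial_rot (oinv x)),
    !oinv_trivial_rot by auto.
  unfold Zc, symp. simpl. f_equal; field.
Qed.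

Lemma shiftz_shiftz x v w : shiftz (shiftz x v) w = shiftz x (v + w).
Proof. unfold shiftz; simpl. f_equal; ring. Qed.

Lemma shiftz_0 x : shiftz x 0 = x.
Proof. destruct x; unfold shiftz; simpl. f_equal; ring. Qed.

Lemma omul_shiftz_l x y w : omul (shiftz x w) y = shiftz (omul x y) w.
Proof. unfold omul, shiftz; simpl. f_equal; ring. Qed.

Lemma omul_shiftz_r x y w : omul x (shiftz y w) = shiftz (omul x y) w.
Proof. unfold omul, shiftz; simpl. f_equal; ring. Qed.

Lemma oinv_shiftz x w : oinv (shiftz x w) = shiftz (oinv x) (- w).
Proof. unfold oinv, shiftz; simpl. f_equal; ring. Qed.

Lemma ozpow_shiftz_H x w k : ot x = 0 -> ozpow (shiftz x w) k = shiftz (ozpow x k) (IZR k * w).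
Proof.
  intro Tx. rewrite !ozpow_trivial_rot by (apply trivial_rot_H; assumption).
  unfold shiftz. cbn [ox oy oz ot]. f_equal; ring.
Qed.

Lemma conjg_Zc g w : conjg g (Zc w) = Zc w.
Proof.
  unfold conjg. rewrite omul_Zc_r, omul_shiftz_l, omul_oinv_r.
  unfold shiftz, Zc; simpl. f_equal; ring.
Qed.

Lemma conjg_shiftz g x w : conjg g (shiftz x w) = shiftz (conjg g x) w.
Proof. rewrite <- !omul_Zc_r, conjg_hom, conjg_Zc. reflexivity. Qed.

Lemma Fu_as_shiftz u x : Fu u x = shiftz x (u * ot x).
Proof. reflexivity. Qed.

Lemma Fu_shiftz u x w : Fu u (shiftz x w) = shiftz (Fu u x) w.
Proof. unfold Fu, shiftz; simpl. f_equal; ring. Qed.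

Lemma Fu_H u x : ot x = 0 -> Fu u x = x.
Proof. destruct x; unfold Fu; simpl; intros ->. f_equal; ring. Qed.

Lemma is_subgroup_shiftz L x w (k : Z) :
  is_subgroup L -> L (Zc w) -> L x -> L (shiftz x (IZR k * w)).
Proof.
  intros HL Lw Lx. pose proof HL as [_ [Lmul _]].
  rewrite <- omul_Zc_r, <- ozpow_Zc. apply Lmul; [exact Lx | apply is_subgroup_ozpow; assumption].
Qed.

Lemma conjg_of_commg x y w : commg x y = Zc w -> conjg x y = shiftz y w.
Proof.
  intro H. rewrite <- omul_Zc_l, <- H. unfold commg, conjg.
  rewrite !omul_assoc, omul_oinv_l, omul_oone_r. reflexivity.
Qed.

Lemma conjg_of_commg_r x y w : commg x y = Zc w -> conjg y x = shiftz x (- w).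
Proof. intro H. apply conjg_of_commg. rewrite <- oinv_commg, H, oinv_Zc. reflexivity. Qed.

Definition conj_shifts (y x : osc) : Prop := exists w, conjg y x = shiftz x w.

Lemma conj_shifts_of_fix y x : conjg y x = x -> conj_shifts y x.
Proof. intro H. exists 0. rewrite shiftz_0. exact H. Qed.

Lemma is_subgroup_conj_shifts y : is_subgroup (conj_shifts y).
Proof.
  split; [|split].
  - apply conj_shifts_of_fix, hom_oone, conjg_hom.
  - intros x z [v Hx] [w Hz]. exists (w + v).
    rewrite conjg_hom, Hx, Hz, omul_shiftz_l, omul_shiftz_r, shiftz_shiftz. reflexivity.
  - intros x [w Hx]. exists (- w).
    rewrite hom_oinv, Hx, oinv_shiftz by apply conjg_hom. reflexivity.
Qed.

Lemma cramer_zero x y p1 p2 q1 q2 :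
  x * p1 + y * q1 = 0 -> x * p2 + y * q2 = 0 -> p1 * q2 - p2 * q1 <> 0 -> x = 0 /\ y = 0.
Proof.
  intros H1 H2 H.
  assert (Ex : x * (p1 * q2 - p2 * q1) = q2 * (x * p1 + y * q1) - q1 * (x * p2 + y * q2)) by ring.
  assert (Ey : y * (p1 * q2 - p2 * q1) = p1 * (x * p2 + y * q2) - p2 * (x * p1 + y * q1)) by ring.
  rewrite H1, H2 in Ex, Ey.
  split; apply (Rmult_eq_reg_r (p1 * q2 - p2 * q1)); auto; lra.
Qed.

Lemma int_coords_zero (i j : Z) x1 x2 y1 y2 :
  IZR i * x1 + IZR j * y1 = 0 -> IZR i * x2 + IZR j * y2 = 0 -> x1 * y2 - x2 * y1 <> 0 ->
  i = 0%Z /\ j = 0%Z.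
Proof.
  intros E1 E2 H. destruct (cramer_zero (IZR i) (IZR j) x1 x2 y1 y2 E1 E2 H) as [Hi Hj].
  split; apply eq_IZR; assumption.
Qed.

Lemma rot_eigen t h1 h2 k :
  cos t * h1 - sin t * h2 = k * h1 -> sin t * h1 + cos t * h2 = k * h2 ->
  h1 * h1 + h2 * h2 <> 0 -> cos t = k /\ sin t = 0.
Proof.
  intros E1 E2 Hh.
  assert (Hdet : h1 * h1 - h2 * - h2 <> 0) by (intro; apply Hh; lra).
  destruct (cramer_zero (cos t - k) (sin t) h1 h2 (- h2) h1) as [Hc Hs]; lra.
Qed.

Lemma sqnorm_neq0_of_symp x y : symp x y <> 0 -> ox x * ox x + oy x * oy x <> 0.
Proof.
  unfold symp. intros H E. apply H.
  assert (Hx : ox x = 0) by nra. assert (Hy : oy x = 0) by nra. rewrite Hx, Hy. ring.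
Qed.

Lemma conjg_H g h : ot h = 0 ->
  conjg g h = mkOsc (cos (ot g) * ox h - sin (ot g) * oy h) (sin (ot g) * ox h + cos (ot g) * oy h)
    (oz h + ox g * (sin (ot g) * ox h + cos (ot g) * oy h)
          - oy g * (cos (ot g) * ox h - sin (ot g) * oy h)) 0.
Proof.
  destruct g as [g1 g2 gz t], h as [h1 h2 hz ht]; simpl; intros ->.
  unfold conjg, omul, oinv; simpl. rewrite Rplus_0_r. f_equal.
  - apply (eq_mod_sin_cos t _ _ (- g1)); ring.
  - apply (eq_mod_sin_cos t _ _ (- g2)); ring.
  - apply (eq_mod_sin_cos t _ _
      (/2 * (g1 * sin t * h1 + g1 * cos t * h2 + sin t * h2 * g2 - h1 * cos t * g2))); field.
  - ring.
Qed.

Lemma conjg_eta e1 e2 x :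
  conjg (mkOsc e1 e2 0 0) x =
  mkOsc (ox x + e1 - (cos (ot x) * e1 - sin (ot x) * e2))
        (oy x + e2 - (sin (ot x) * e1 + cos (ot x) * e2))
        (oz x + / 2 * (e1 * oy x - e2 * ox x)
           - / 2 * ((e1 + ox x) * (sin (ot x) * e1 + cos (ot x) * e2)
                    - (e2 + oy x) * (cos (ot x) * e1 - sin (ot x) * e2)))
        (ot x).
Proof.
  destruct x. unfold conjg, omul, oinv; simpl. rewrite ?Rplus_0_l, ?Rplus_0_r, cos_0, sin_0.
  f_equal; ring.
Qed.

Lemma conjg_eta_trivial_rot e1 e2 x : trivial_rot x ->
  conjg (mkOsc e1 e2 0 0) x = shiftz x (symp (mkOsc e1 e2 0 0) x).
Proof.
  intros [Hc Hs]. rewrite conjg_eta, Hc, Hs. unfold shiftz, symp; simpl. f_equal; field.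
Qed.

Lemma fixing_H_pair y a b :
  ot a = 0 -> ot b = 0 -> symp a b <> 0 -> conjg y a = a -> conjg y b = b ->
  trivial_rot y /\ ox y = 0 /\ oy y = 0.
Proof.
  intros Ta Tb Hab Ha Hb.
  rewrite conjg_H in Ha, Hb by assumption.
  destruct (mkOsc_eq_coords _ _ _ _ _ Ha) as (A1 & A2 & A3).
  destruct (mkOsc_eq_coords _ _ _ _ _ Hb) as (B1 & B2 & B3).
  destruct (rot_eigen (ot y) (ox a) (oy a) 1) as [Hc Hs]; [lra | lra | |].
  { exact (sqnorm_neq0_of_symp a b Hab). }
  rewrite Hc, Hs in A3, B3.
  destruct (cramer_zero (ox y) (oy y) (oy a) (oy b) (- ox a) (- ox b)) as [Hx Hy];
    [lra | lra | unfold symp in Hab; lra |].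
  unfold trivial_rot. auto.
Qed.

Lemma trivial_rot_of_conj_shift y h w :
  ot h = 0 -> ox h * ox h + oy h * oy h <> 0 -> conjg y h = shiftz h w -> trivial_rot y.
Proof.
  intros Th Hh E. rewrite conjg_H in E by exact Th.
  destruct (mkOsc_eq_coords _ _ _ _ _ E) as (E1 & E2 & _). cbn [ox oy shiftz] in E1, E2.
  destruct (rot_eigen (ot y) (ox h) (oy h) 1) as [Hc Hs]; [lra | lra | exact Hh |].
  split; assumption.
Qed.

Lemma exists_symp_solution x y A B : symp x y <> 0 ->
  exists e1 e2, symp (mkOsc e1 e2 0 0) x = A /\ symp (mkOsc e1 e2 0 0) y = B.
Proof.
  intro H. exists ((B * ox x - A * ox y) / symp x y), ((B * oy x - A * oy y) / symp x y).
  unfold symp in *. simpl. split; field; exact H.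
Qed.

(** * The Heisenberg part and the [t]-projection of a lattice *)

Lemma symp_LH_int L x y : normalised L -> LH L x -> LH L y -> exists n : Z, symp x y = IZR n.
Proof.
  intros Hn [Lx Tx] [Ly Ty].
  destruct (proj1 (Hn (commg x y))) as [n Hxy].
  { rewrite <- (omul_oone_r (commg x y)).
    apply cg_comm; [split | split | constructor]; assumption. }
  exists n. rewrite commg_trivial_rot in Hxy by (apply trivial_rot_H; assumption).
  injection Hxy. auto.
Qed.

Lemma comm_gen_symp_multiple L a b c :
  ot a = 0 -> ot b = 0 -> c = Zc (oz c) -> (forall x, LH L x -> exists p, x = hword a b c p) ->
  forall x, comm_gen (LH L) x -> exists K : Z, x = Zc (IZR K * symp a b).
Proof.
  intros Ta Tb Ec Hnf x Hx.
  assert (Rabc : trivial_rot a /\ trivial_rot b /\ trivial_rot c).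
  { rewrite Ec. repeat split; apply trivial_rot_H; assumption || reflexivity. }
  induction Hx as [| g h x Hg Hh _ [K ->]].
  - exists 0%Z. unfold oone, Zc. f_equal; ring.
  - destruct (Hnf g Hg) as [[[i j] k] ->], (Hnf h Hh) as [[[i' j'] k'] ->].
    destruct (hword_coords a b c i j k) as [X [Y _]], (hword_coords a b c i' j' k') as [X' [Y' _]];
      try tauto.
    rewrite commg_trivial_rot, omul_Zc_l
      by (apply trivial_rot_H; first [exact (proj2 Hg) | exact (proj2 Hh)]).
    exists (i * j' - j * i' + K)%Z.
    assert (ox c = 0 /\ oy c = 0) as [Cx Cy] by (rewrite Ec; split; reflexivity).
    unfold symp, shiftz, Zc. cbn [ox oy oz ot].
    rewrite X, Y, X', Y', Cx, Cy, plus_IZR, minus_IZR, !mult_IZR. f_equal; ring.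
Qed.

Lemma heis_generators L a b c n :
  normalised L -> (0 < n)%nat -> LH L a -> LH L b -> LH L c ->
  commg a b = ozpow c (Z.of_nat n) -> (forall x, LH L x -> exists p, x = hword a b c p) ->
  (symp a b = 1 \/ symp a b = -1) /\ c = Zc (symp a b / INR n).
Proof.
  intros Hn Hpos Ha Hb Hc Hab Hnf.
  pose proof (proj2 Ha) as Ta. pose proof (proj2 Hb) as Tb. pose proof (proj2 Hc) as Tc.
  assert (Hn0 : INR n <> 0) by (apply not_0_INR; lia).
  assert (Ec : c = Zc (symp a b / INR n)).
  { rewrite commg_trivial_rot, ozpow_trivial_rot, <- INR_IZR_INZ in Hab
      by (apply trivial_rot_H; assumption).
    injection Hab as E1 E2 E3. destruct c as [c1 c2 cz ct]; unfold Zc; simpl in *.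
    f_equal; [| | rewrite E3; field; exact Hn0 | exact Tc];
      apply (Rmult_eq_reg_l (INR n)); auto; lra. }
  split; [|exact Ec].
  destruct (symp_LH_int L a b Hn Ha Hb) as [N HN].
  destruct (comm_gen_symp_multiple L a b c Ta Tb ltac:(rewrite Ec; reflexivity) Hnf (Zc 1))
    as [K HK]; [apply Hn; exists 1%Z; reflexivity |].
  injection HK as HK. rewrite HN in HK.
  assert (HKN : (K * N = 1)%Z) by (apply eq_IZR; rewrite mult_IZR; symmetry; exact HK).
  destruct (Z.eq_mul_1 N K ltac:(lia)) as [-> | ->]; [left | right]; exact HN.
Qed.

Lemma heis_center L r : normalised L -> heis_index L r ->
  exists w, L (Zc w) /\ (INR r * w = 1 \/ INR r * w = -1) /\
    forall z, LH L (Zc z) -> exists k : Z, z = IZR k * w.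
Proof.
  intros Hn [Hr [a [b [c [Ha [Hb [Hc [_ [_ [Hab Hnf]]]]]]]]]].
  destruct (heis_generators L a b c r Hn Hr Ha Hb Hc Hab) as [HI Ec].
  { intros x Hx. destruct (proj1 (Hnf x) Hx) as [p [Hp _]]. exists p. exact Hp. }
  assert (Hr0 : INR r <> 0) by (apply not_0_INR; lia).
  exists (symp a b / INR r). split; [|split].
  - rewrite <- Ec. exact (proj1 Hc).
  - destruct HI as [-> | ->]; [left | right]; field; exact Hr0.
  - intros z Hz. destruct (proj1 (Hnf (Zc z)) Hz) as [[[i j] k] [Ez _]].
    destruct (hword_coords a b c i j k) as (X & Y & _);
      try (rewrite ?Ec; apply trivial_rot_H; apply Ha || apply Hb || reflexivity).
    rewrite <- Ez, Ec in X, Y. cbn [ox oy Zc] in X, Y.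
    destruct (int_coords_zero i j (ox a) (oy a) (ox b) (oy b)) as [-> ->]; [lra | lra | |].
    { unfold symp in HI. destruct HI; lra. }
    rewrite hword_00, Ec, ozpow_Zc in Ez. exists k. injection Ez. auto.
Qed.

Definition ot_lattice (L : osc -> Prop) (lam : R) : Prop :=
  forall t, (exists x, L x /\ ot x = t) <-> exists n : Z, t = IZR n * lam.

Lemma ot_lattice_mem L lam x : ot_lattice L lam -> L x -> exists n : Z, ot x = IZR n * lam.
Proof. intros H Hx. apply H. exists x. auto. Qed.

Lemma ot_lattice_gen L lam : ot_lattice L lam -> exists x, L x /\ ot x = lam.
Proof. intro H. apply H. exists 1%Z. ring. Qed.

Lemma spanned_of_unique_nf L a b c d :
  (forall x, L x <-> exists! p : Z * Z * Z * Z,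
     x = match p with (i, j, k, m) => omul (hword a b c (i, j, k)) (ozpow d m) end) ->
  spanned_by L a b c d.
Proof.
  intros Hnf x Hx. destruct (proj1 (Hnf x) Hx) as [[[[i j] k] m] [E _]]. exists i, j, k, m. exact E.
Qed.

Lemma ot_generator_pm L lam a b c d :
  ot_lattice L lam -> 0 < lam -> L d -> spanned_by L a b c d ->
  ot a = 0 -> ot b = 0 -> ot c = 0 -> ot d = lam \/ ot d = - lam.
Proof.
  intros Hl Hlam Ld Hspan Ta Tb Tc.
  destruct (ot_lattice_gen L lam Hl) as [x [Lx Tx]].
  destruct (Hspan x Lx) as [i [j [k [m ->]]]].
  destruct (ot_lattice_mem L lam d Hl Ld) as [n Hn].
  destruct (hword_coords a b c i j k) as [_ [_ Th]]; try (apply trivial_rot_H; assumption).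
  rewrite ot_omul, Th, ot_ozpow, Ta, Tb, Tc, Hn in Tx.
  assert (Hmn : (m * n = 1)%Z).
  { apply eq_IZR. rewrite mult_IZR. apply (Rmult_eq_reg_r lam); lra. }
  destruct (Z.eq_mul_1 n m ltac:(lia)) as [-> | ->]; [left | right]; rewrite Hn; simpl; ring.
Qed.

Lemma LH_spanned L a b c d :
  spanned_by L a b c d -> ot a = 0 -> ot b = 0 -> ot c = 0 -> ot d <> 0 ->
  forall x, LH L x -> exists p, x = hword a b c p.
Proof.
  intros Hspan Ta Tb Tc Td x [Lx Tx].
  destruct (Hspan x Lx) as [i [j [k [m ->]]]].
  destruct (hword_coords a b c i j k) as [_ [_ Th]]; try (apply trivial_rot_H; assumption).
  rewrite ot_omul, Th, ot_ozpow, Ta, Tb, Tc in Tx.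
  assert (m = 0%Z) as ->.
  { apply eq_IZR. apply (Rmult_eq_reg_r (ot d)); [lra | exact Td]. }
  exists (i, j, k). apply omul_oone_r.
Qed.

(** * Types with [s0 = 1]: [F_u] preserves [L] *)

Lemma Fu_image_self L u w :
  is_subgroup L -> L (Zc w) -> (forall x, L x -> exists k : Z, u * ot x = IZR k * w) ->
  forall y, image (Fu u) L y <-> L y.
Proof.
  intros HL Lw Hk y. split.
  - intros [x [Lx ->]]. destruct (Hk x Lx) as [k Ek]. rewrite Fu_as_shiftz, Ek.
    apply is_subgroup_shiftz; assumption.
  - intro Ly. destruct (Hk y Ly) as [k Ek]. exists (shiftz y (IZR (- k) * w)). split.
    + apply is_subgroup_shiftz; assumption.
    + rewrite Fu_as_shiftz, shiftz_shiftz. cbn [ot shiftz]. rewrite Ek, opp_IZR.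
      replace (- IZR k * w + IZR k * w) with 0 by ring. symmetry. apply shiftz_0.
Qed.

Lemma untwisted_case L r lam T :
  is_lattice L -> normalised L -> heis_index L r -> 0 < lam -> ot_lattice L lam -> s0 T r = 1 ->
  exists g, forall y, image (Fu (1 / (s0 T r * INR r * lam))) L y <-> image (conjg g) L y.
Proof.
  intros [HL _] Hn Hh Hlam Hl Hs. exists oone. intro y. rewrite image_conjg_oone, Hs.
  destruct (heis_center L r Hn Hh) as [w [Lw [Hw _]]].
  assert (Hr : INR r <> 0) by (apply not_0_INR; destruct Hh; lia).
  apply (Fu_image_self L _ w HL Lw). intros x Lx.
  destruct (ot_lattice_mem L lam x Hl Lx) as [n ->].
  assert (Ew : w = INR r * w / INR r) by (field; exact Hr).
  destruct Hw as [Hw | Hw]; rewrite Ew, Hw; [exists n | exists (- n)%Z]; rewrite ?opp_IZR;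
    field; lra.
Qed.

(** * Types [L^{2,+}], [L^{3,+}], [L^4] and [L^{4,+}]: conjugation by a horizontal element *)

Lemma ot_gens_nonT1 T n a b c d :
  (forall r0, T <> T1 r0) -> (0 < n)%nat -> commg a b = ozpow c (Z.of_nat n) ->
  conjg d a = fst (S_images T n a b c) -> conjg d b = snd (S_images T n a b c) ->
  ot a = 0 /\ ot b = 0 /\ ot c = 0.
Proof.
  intros HT Hn Hab Ha Hb.
  apply (f_equal ot) in Hab, Ha, Hb. rewrite ot_commg, ot_ozpow, <- INR_IZR_INZ in Hab.
  rewrite ot_conjg in Ha, Hb.
  assert (Tc : ot c = 0).
  { assert (INR n <> 0) by (apply not_0_INR; lia). apply (Rmult_eq_reg_l (INR n)); lra. }
  destruct T; [exfalso; eapply HT; reflexivity | ..]; cbn [S_images fst snd] in Ha, Hb;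
    rewrite ?ot_omul, ?ot_oinv, ?ot_ozpow in Ha; rewrite ?ot_omul, ?ot_oinv, ?ot_ozpow in Hb;
    rewrite Tc in *; repeat split; lra.
Qed.

Lemma nonT1_setup L r lam T :
  is_lattice L -> normalised L -> 0 < lam -> ot_lattice L lam -> has_type L T r ->
  (forall r0, T <> T1 r0) ->
  exists a b d cz, L a /\ L b /\ L (Zc cz) /\ L d /\ spanned_by L a b (Zc cz) d /\
    ot a = 0 /\ ot b = 0 /\ symp a b = INR r * cz /\ (symp a b = 1 \/ symp a b = -1) /\
    (ot d = lam \/ ot d = - lam) /\
    conjg d a = fst (S_images T r a b (Zc cz)) /\ conjg d b = snd (S_images T r a b (Zc cz)) /\
    (0 < r)%nat /\ type_cond T r.
Proof.
  intros _ Hn Hlam Hl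
    [Hr [Hcond [a [b [c [d [La [Lb [Lc [Ld [_ [_ [_ [Hab [Ha [Hb Hnf]]]]]]]]]]]]]]]] HT.
  assert (type_index T r = r) as Ti
    by (destruct T; [exfalso; eapply HT; reflexivity | ..]; reflexivity).
  rewrite Ti in *. apply spanned_of_unique_nf in Hnf.
  destruct (ot_gens_nonT1 T r a b c d HT Hr Hab Ha Hb) as [Ta [Tb Tc]].
  pose proof (ot_generator_pm L lam a b c d Hl Hlam Ld Hnf Ta Tb Tc) as Td.
  destruct (heis_generators L a b c r Hn Hr (conj La Ta) (conj Lb Tb) (conj Lc Tc) Hab) as [HI Ec].
  { apply (LH_spanned L a b c d Hnf Ta Tb Tc). destruct Td as [-> | ->]; lra. }
  assert (Hr0 : INR r <> 0) by (apply not_0_INR; lia).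
  exists a, b, d, (symp a b / INR r). rewrite <- Ec. repeat split; try assumption.
  field. exact Hr0.
Qed.

Lemma image_Fu_conjg_twist L a b d u g cz (ka kb e k : Z) :
  is_subgroup L -> spanned_by L a b (Zc cz) d -> L a -> L b -> L (Zc cz) -> L d ->
  ot a = 0 -> ot b = 0 ->
  conjg g a = shiftz a (IZR ka * cz) -> conjg g b = shiftz b (IZR kb * cz) ->
  conjg g d = shiftz (omul (ozpow a e) (Fu u d)) (IZR k * cz) ->
  forall y, image (Fu u) L y <-> image (conjg g) L y.
Proof.
  intros HL Hspan La Lb Lc Ld Ta Tb Ga Gb Gd. pose proof HL as [_ [Lmul Linv]].
  assert (Gunshift : forall x (n : Z), conjg g x = shiftz x (IZR n * cz) ->
            conjg g (shiftz x (IZR (- n) * cz)) = x).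
  { intros x n Gx. rewrite conjg_shiftz, Gx, shiftz_shiftz, opp_IZR.
    replace (IZR n * cz + - IZR n * cz) with 0 by ring. apply shiftz_0. }
  assert (Tae : ot (ozpow a e) = 0) by (rewrite ot_ozpow, Ta; ring).
  set (y := shiftz (ozpow a e) (IZR (k - e * ka) * cz)).
  assert (Ly : L y) by (apply is_subgroup_shiftz, is_subgroup_ozpow; auto).
  assert (Gy : conjg g y = shiftz (ozpow a e) (IZR k * cz)).
  { unfold y. rewrite conjg_shiftz, (hom_ozpow _ (conjg_hom g)), Ga, ozpow_shiftz_H, shiftz_shiftz
      by exact Ta.
    f_equal. rewrite minus_IZR, mult_IZR. ring. }
  apply (image_eq_of_generators L a b (Zc cz) d); auto using conjg_hom, Fu_hom.
  - exists (shiftz a (IZR (- ka) * cz)).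
    split; [apply is_subgroup_shiftz; auto | rewrite Gunshift, Fu_H; auto].
  - exists (shiftz b (IZR (- kb) * cz)).
    split; [apply is_subgroup_shiftz; auto | rewrite Gunshift, Fu_H; auto].
  - exists (Zc cz). split; [exact Lc | rewrite conjg_Zc, Fu_H; reflexivity].
  - exists (omul (oinv y) d). split; [auto |].
    rewrite conjg_hom, hom_oinv, Gy, Gd by apply conjg_hom.
    rewrite omul_shiftz_r, oinv_shiftz, omul_shiftz_l, shiftz_shiftz, <- omul_assoc, omul_oinv_l,
      omul_oone_l.
    replace (- (IZR k * cz) + IZR k * cz) with 0 by ring. symmetry. apply shiftz_0.
  - exists (shiftz a (IZR ka * cz)).
    split; [apply is_subgroup_shiftz; auto | rewrite Ga, Fu_H; auto].
  - exists (shiftz b (IZR kb * cz)).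
    split; [apply is_subgroup_shiftz; auto | rewrite Gb, Fu_H; auto].
  - exists (Zc cz). split; [exact Lc | rewrite conjg_Zc, Fu_H; reflexivity].
  - exists (shiftz (omul (ozpow a e) d) (IZR k * cz)). split.
    + apply is_subgroup_shiftz, Lmul; auto. apply is_subgroup_ozpow; auto.
    + rewrite Gd, Fu_shiftz, Fu_hom, (Fu_H u (ozpow a e) Tae). reflexivity.
Qed.

(* [(f1, f2)] is [eta = (e1, e2)] rotated by [ot d]; naming it keeps the last three conditions
   linear once the rotation of [alpha] and [beta] by [ot d] is known. *)
Lemma twist_criterion L a b d u cz e1 e2 f1 f2 (ka kb e k : Z) :
  is_subgroup L -> spanned_by L a b (Zc cz) d -> L a -> L b -> L (Zc cz) -> L d ->
  ot a = 0 -> ot b = 0 ->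
  symp (mkOsc e1 e2 0 0) a = IZR ka * cz -> symp (mkOsc e1 e2 0 0) b = IZR kb * cz ->
  cos (ot d) * e1 - sin (ot d) * e2 = f1 -> sin (ot d) * e1 + cos (ot d) * e2 = f2 ->
  e1 - f1 = IZR e * ox a -> e2 - f2 = IZR e * oy a ->
  / 2 * (e1 * oy d - e2 * ox d) - / 2 * ((e1 + ox d) * f2 - (e2 + oy d) * f1)
    = IZR e * oz a + IZR k * cz + u * ot d + / 2 * (IZR e * symp a d) ->
  forall y, image (Fu u) L y <-> image (conjg (mkOsc e1 e2 0 0)) L y.
Proof.
  intros HL Hspan La Lb Lc Ld Ta Tb Sa Sb F1 F2 X Y Z.
  apply (image_Fu_conjg_twist L a b d u _ cz ka kb e k); auto.
  - rewrite conjg_eta_trivial_rot, Sa by (apply trivial_rot_H; exact Ta). reflexivity.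
  - rewrite conjg_eta_trivial_rot, Sb by (apply trivial_rot_H; exact Tb). reflexivity.
  - rewrite conjg_eta, F1, F2.
    rewrite omul_trivial_rot, ozpow_trivial_rot
      by (try apply is_subgroup_ozpow; auto using is_subgroup_trivial_rot, trivial_rot_H).
    unfold shiftz, symp in *. cbn [ox oy oz ot Fu]. rewrite Ta. f_equal; lra.
Qed.

Lemma Fu_shift_pm s r lam t cz :
  0 < s -> 0 < r -> 0 < lam -> (t = lam \/ t = - lam) -> (r * cz = 1 \/ r * cz = -1) ->
  1 / (s * r * lam) * t = cz / s \/ 1 / (s * r * lam) * t = - (cz / s).
Proof.
  intros Hs Hr Hlam Ht Hcz.
  assert (Ecz : cz = r * cz / r) by (field; lra).
  destruct Ht as [-> | ->], Hcz as [Hc | Hc]; rewrite Ecz, Hc; [left | right | right | left];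
    field; lra.
Qed.

(* [delta] acts on [H] by the rotation [R = -1]; [eta = alpha / 2] solves [(1 - R) eta = alpha]. *)
Lemma twisted_case_T2p L r lam :
  is_lattice L -> normalised L -> 0 < lam -> ot_lattice L lam -> has_type L T2p r ->
  exists g, forall y, image (Fu (1 / (s0 T2p r * INR r * lam))) L y <-> image (conjg g) L y.
Proof.
  intros Hlat Hn Hlam Hl Ht. pose proof (proj1 Hlat) as HL.
  destruct (nonT1_setup L r lam T2p Hlat Hn Hlam Hl Ht ltac:(discriminate))
    as (a & b & d & cz & La & Lb & Lc & Ld & Hspan & Ta & Tb & Hab & HI & Td & Ha & Hb & Hr & Hev).
  destruct (proj1 (Nat.even_spec r) Hev) as [m Hm].
  assert (Hrm : INR r = 2 * INR m) by (rewrite Hm, mult_INR; reflexivity).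
  assert (Hr0 : 0 < INR r) by (apply lt_0_INR; exact Hr).
  cbn [S_images fst snd] in Ha, Hb.
  rewrite conjg_H, omul_Zc_r, oinv_trivial_rot in Ha by (exact Ta || apply trivial_rot_H, Ta).
  rewrite conjg_H, oinv_Zc, omul_Zc_r, oinv_trivial_rot in Hb
    by (exact Tb || apply trivial_rot_H, Tb).
  destruct (mkOsc_eq_coords _ _ _ _ _ Ha) as (A1 & A2 & A3). cbn [ox oy oz shiftz] in A1, A2, A3.
  destruct (mkOsc_eq_coords _ _ _ _ _ Hb) as (B1 & B2 & B3). cbn [ox oy oz shiftz] in B1, B2, B3.
  rewrite A1, A2 in A3. rewrite B1, B2 in B3.
  rewrite Hab in HI. rewrite Hrm in Hab.
  exists (mkOsc (ox a / 2) (oy a / 2) 0 0).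
  change (s0 T2p r) with 2. set (u := 1 / (2 * INR r * lam)).
  destruct (Fu_shift_pm 2 (INR r) lam (ot d) cz ltac:(lra) Hr0 Hlam Td HI) as [Hu | Hu];
    fold u in Hu;
    [ apply (twist_criterion L a b d u cz _ _ (- ox a / 2) (- oy a / 2) 0 (Z.of_nat m) 1 (-1))
    | apply (twist_criterion L a b d u cz _ _ (- ox a / 2) (- oy a / 2) 0 (Z.of_nat m) 1 0) ];
    auto.
  all: rewrite <- ?INR_IZR_INZ; unfold symp in *; cbn [ox oy oz ot]; lra.
Qed.

(* [delta] rotates by a quarter turn: [R alpha = beta], [R beta = - alpha], so
   [eta = (alpha + beta) / 2] solves [(1 - R) eta = alpha]. *)
Lemma twisted_case_T4 L r lam :
  is_lattice L -> normalised L -> 0 < lam -> ot_lattice L lam -> has_type L T4 r ->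
  Nat.eqb (Nat.modulo r 4) 2 = true ->
  exists g, forall y, image (Fu (1 / (s0 T4 r * INR r * lam))) L y <-> image (conjg g) L y.
Proof.
  intros Hlat Hn Hlam Hl Ht Hmod. pose proof (proj1 Hlat) as HL.
  destruct (nonT1_setup L r lam T4 Hlat Hn Hlam Hl Ht ltac:(discriminate))
    as (a & b & d & cz & La & Lb & Lc & Ld & Hspan & Ta & Tb & Hab & HI & Td & Ha & Hb & Hr & _).
  assert (Hs0 : s0 T4 r = 2) by (unfold s0; rewrite Hmod; reflexivity).
  apply Nat.eqb_eq in Hmod.
  assert (exists m, r = (4 * m + 2)%nat) as [m Hm].
  { exists (r / 4)%nat. pose proof (Nat.div_mod_eq r 4). lia. }
  assert (Hrm : INR r = 4 * INR m + 2) by (rewrite Hm, plus_INR, mult_INR; simpl; ring).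
  assert (Hr0 : 0 < INR r) by (apply lt_0_INR; exact Hr).
  cbn [S_images fst snd] in Ha, Hb.
  rewrite conjg_H in Ha by exact Ta.
  rewrite conjg_H, oinv_trivial_rot in Hb by (exact Tb || apply trivial_rot_H, Ta).
  destruct (mkOsc_eq_coords _ _ _ _ _ Ha) as (A1 & A2 & A3).
  destruct (mkOsc_eq_coords _ _ _ _ _ Hb) as (B1 & B2 & B3). cbn [ox oy oz] in B1, B2, B3.
  rewrite A1, A2 in A3. rewrite B1, B2 in B3.
  rewrite Hab in HI. rewrite Hrm in Hab.
  exists (mkOsc ((ox a + ox b) / 2) ((oy a + oy b) / 2) 0 0).
  rewrite Hs0. set (u := 1 / (2 * INR r * lam)).
  destruct (Fu_shift_pm 2 (INR r) lam (ot d) cz ltac:(lra) Hr0 Hlam Td HI) as [Hu | Hu];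
    fold u in Hu;
    [ apply (twist_criterion L a b d u cz _ _ ((ox b - ox a) / 2) ((oy b - oy a) / 2)
        (- (2 * Z.of_nat m + 1)) (2 * Z.of_nat m + 1) 1 (- Z.of_nat m - 1))
    | apply (twist_criterion L a b d u cz _ _ ((ox b - ox a) / 2) ((oy b - oy a) / 2)
        (- (2 * Z.of_nat m + 1)) (2 * Z.of_nat m + 1) 1 (- Z.of_nat m)) ];
    auto.
  all: rewrite ?minus_IZR, ?opp_IZR, ?plus_IZR, ?mult_IZR, <- ?INR_IZR_INZ; unfold symp in *;
    cbn [ox oy oz ot]; lra.
Qed.

(* As for [L^4_r], now with [S(alpha) = beta gamma]. *)
Lemma twisted_case_T4p L r lam :
  is_lattice L -> normalised L -> 0 < lam -> ot_lattice L lam -> has_type L T4p r ->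
  Nat.eqb (Nat.modulo r 4) 2 = false ->
  exists g, forall y, image (Fu (1 / (s0 T4p r * INR r * lam))) L y <-> image (conjg g) L y.
Proof.
  intros Hlat Hn Hlam Hl Ht Hmod. pose proof (proj1 Hlat) as HL.
  destruct (nonT1_setup L r lam T4p Hlat Hn Hlam Hl Ht ltac:(discriminate))
    as (a & b & d & cz & La & Lb & Lc & Ld & Hspan & Ta & Tb & Hab & HI & Td & Ha & Hb & Hr & Hev).
  assert (Hs0 : s0 T4p r = 2) by (unfold s0; rewrite Hmod; reflexivity).
  apply Nat.eqb_neq in Hmod.
  assert (exists m, r = (4 * m)%nat) as [m Hm].
  { destruct (proj1 (Nat.even_spec r) Hev) as [k Hk].
    exists (r / 4)%nat. pose proof (Nat.div_mod_eq r 4). pose proof (Nat.mod_upper_bound r 4).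
    lia. }
  assert (Hrm : INR r = 4 * INR m) by (rewrite Hm, mult_INR; simpl; ring).
  assert (Hr0 : 0 < INR r) by (apply lt_0_INR; exact Hr).
  cbn [S_images fst snd] in Ha, Hb.
  rewrite conjg_H, omul_Zc_r in Ha by exact Ta.
  rewrite conjg_H, oinv_trivial_rot in Hb by (exact Tb || apply trivial_rot_H, Ta).
  destruct (mkOsc_eq_coords _ _ _ _ _ Ha) as (A1 & A2 & A3). cbn [ox oy oz shiftz] in A1, A2, A3.
  destruct (mkOsc_eq_coords _ _ _ _ _ Hb) as (B1 & B2 & B3). cbn [ox oy oz] in B1, B2, B3.
  rewrite A1, A2 in A3. rewrite B1, B2 in B3.
  rewrite Hab in HI. rewrite Hrm in Hab.
  exists (mkOsc ((ox a + ox b) / 2) ((oy a + oy b) / 2) 0 0).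
  rewrite Hs0. set (u := 1 / (2 * INR r * lam)).
  destruct (Fu_shift_pm 2 (INR r) lam (ot d) cz ltac:(lra) Hr0 Hlam Td HI) as [Hu | Hu];
    fold u in Hu;
    [ apply (twist_criterion L a b d u cz _ _ ((ox b - ox a) / 2) ((oy b - oy a) / 2)
        (- (2 * Z.of_nat m)) (2 * Z.of_nat m) 1 (- Z.of_nat m - 1))
    | apply (twist_criterion L a b d u cz _ _ ((ox b - ox a) / 2) ((oy b - oy a) / 2)
        (- (2 * Z.of_nat m)) (2 * Z.of_nat m) 1 (- Z.of_nat m)) ];
    auto.
  all: rewrite ?minus_IZR, ?opp_IZR, ?mult_IZR, <- ?INR_IZR_INZ; unfold symp in *;
    cbn [ox oy oz ot]; lra.
Qed.

(* [delta] rotates by a third of a turn: [R alpha = beta], [R beta = - alpha - beta], so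
   [eta = (2 alpha + beta) / 3] solves [(1 - R) eta = alpha]; according to the sign of [u t(delta)]
   the conjugation by [eta] or by [- eta] works. *)
Lemma twisted_case_T3p L r lam :
  is_lattice L -> normalised L -> 0 < lam -> ot_lattice L lam -> has_type L T3p r ->
  exists g, forall y, image (Fu (1 / (s0 T3p r * INR r * lam))) L y <-> image (conjg g) L y.
Proof.
  intros Hlat Hn Hlam Hl Ht. pose proof (proj1 Hlat) as HL.
  destruct (nonT1_setup L r lam T3p Hlat Hn Hlam Hl Ht ltac:(discriminate))
    as (a & b & d & cz & La & Lb & Lc & Ld & Hspan & Ta & Tb & Hab & HI & Td & Ha & Hb & Hr & H3).
  assert (exists m, r = (3 * m)%nat) as [m Hm].
  { exists (r / 3)%nat. pose proof (Nat.div_mod_eq r 3). cbn [type_cond] in H3. lia. }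
  assert (Hrm : INR r = 3 * INR m) by (rewrite Hm, mult_INR; simpl; ring).
  assert (Hr0 : 0 < INR r) by (apply lt_0_INR; exact Hr).
  assert (Rb' : trivial_rot (oinv b)) by (apply is_subgroup_trivial_rot, trivial_rot_H, Tb).
  cbn [S_images fst snd] in Ha, Hb.
  rewrite conjg_H, ozpow_Zc, omul_Zc_r in Ha by exact Ta.
  rewrite conjg_H, omul_Zc_r, omul_shiftz_r, omul_trivial_rot, !oinv_trivial_rot in Hb
    by (exact Tb || exact Rb' || apply trivial_rot_H; assumption).
  destruct (mkOsc_eq_coords _ _ _ _ _ Ha) as (A1 & A2 & A3). cbn [ox oy oz shiftz] in A1, A2, A3.
  destruct (mkOsc_eq_coords _ _ _ _ _ Hb) as (B1 & B2 & B3). cbn [ox oy oz shiftz] in B1, B2, B3.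
  rewrite A1, A2 in A3. rewrite B1, B2 in B3.
  rewrite minus_IZR, <- INR_IZR_INZ in A3.
  rewrite Hab in HI. rewrite Hrm in Hab, A3.
  change (s0 T3p r) with 3. set (u := 1 / (3 * INR r * lam)).
  destruct (Fu_shift_pm 3 (INR r) lam (ot d) cz ltac:(lra) Hr0 Hlam Td HI) as [Hu | Hu];
    fold u in Hu.
  - exists (mkOsc ((2 * ox a + ox b) / 3) ((2 * oy a + oy b) / 3) 0 0).
    apply (twist_criterion L a b d u cz _ _ ((ox b - ox a) / 3) ((oy b - oy a) / 3)
      (- Z.of_nat m) (2 * Z.of_nat m) 1 (- (2 * Z.of_nat m))); auto.
    all: rewrite ?opp_IZR, ?mult_IZR, <- ?INR_IZR_INZ; unfold symp in *; cbn [ox oy oz ot] in *;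
      lra.
  - exists (mkOsc (- (2 * ox a + ox b) / 3) (- (2 * oy a + oy b) / 3) 0 0).
    apply (twist_criterion L a b d u cz _ _ (- (ox b - ox a) / 3) (- (oy b - oy a) / 3)
      (Z.of_nat m) (- (2 * Z.of_nat m)) (-1) (Z.of_nat m)); auto.
    all: rewrite ?opp_IZR, ?mult_IZR, <- ?INR_IZR_INZ; unfold symp in *; cbn [ox oy oz ot] in *;
      lra.
Qed.

(** * Type [L^1]: all of [L] rotates trivially *)

Lemma fixing_generators L a b c d a0 b0 y :
  spanned_by L a b c d -> L a0 -> L b0 -> ot a0 = 0 -> ot b0 = 0 -> symp a0 b0 <> 0 ->
  conjg y a = a -> conjg y b = b -> conjg y c = c -> conjg y d = d ->
  trivial_rot y /\ ox y = 0 /\ oy y = 0.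
Proof.
  intros Hspan La0 Lb0 Ta0 Tb0 H0 Ya Yb Yc Yd.
  assert (Hfix : forall x, L x -> conjg y x = x).
  { intro x. apply (spanned_all (fun x => conjg y x = x) L a b c d); auto.
    apply is_subgroup_fixed, conjg_hom. }
  apply (fixing_H_pair y a0 b0); auto.
Qed.

Lemma shifting_generators L a b c d h y :
  spanned_by L a b c d -> L h -> ot h = 0 -> ox h * ox h + oy h * oy h <> 0 ->
  conj_shifts y a -> conj_shifts y b -> conj_shifts y c -> conj_shifts y d -> trivial_rot y.
Proof.
  intros Hspan Lh Th Hh Ya Yb Yc Yd.
  destruct (spanned_all (conj_shifts y) L a b c d h) as [w Hw]; auto using is_subgroup_conj_shifts.
  exact (trivial_rot_of_conj_shift y h w Th Hh Hw).
Qed.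

(* [gamma] and [delta] are central in [L], while conjugation by [alpha] or [beta] shifts every
   element of [L] centrally; an element of [L cap H] with [xi <> 0] then forces trivial rotations. *)
Lemma T1_structure L a b c d a0 b0 r0 :
  spanned_by L a b c d -> L a0 -> L b0 ->
  ot a0 = 0 -> ot b0 = 0 -> symp a0 b0 <> 0 -> (0 < r0)%nat ->
  omul c a = omul a c -> omul c b = omul b c -> omul c d = omul d c ->
  commg a b = ozpow c (Z.of_nat r0) -> conjg d a = a -> conjg d b = b ->
  trivial_rot a /\ trivial_rot b /\ trivial_rot d /\ ox d = 0 /\ oy d = 0 /\
  c = Zc (oz c) /\ symp a b = INR r0 * oz c.
Proof.
  intros Hspan La0 Lb0 Ta0 Tb0 H0 Hr0 Eca Ecb Ecd Hab Hda Hdb.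
  assert (Ead : omul a d = omul d a) by (symmetry; apply commute_of_conjg, Hda).
  assert (Ebd : omul b d = omul d b) by (symmetry; apply commute_of_conjg, Hdb).
  destruct (fixing_generators L a b c d a0 b0 c) as [_ [Cx Cy]];
    try apply conjg_of_commute; auto.
  destruct (fixing_generators L a b c d a0 b0 d) as [Rd [Dx Dy]];
    try apply conjg_of_commute; auto.
  assert (Tc : ot c = 0).
  { apply (f_equal ot) in Hab. rewrite ot_commg, ot_ozpow, <- INR_IZR_INZ in Hab.
    assert (INR r0 <> 0) by (apply not_0_INR; lia). apply (Rmult_eq_reg_l (INR r0)); lra. }
  assert (Ec : c = Zc (oz c)) by (destruct c; cbn in *; subst; reflexivity).
  assert (Hcomm : commg a b = Zc (INR r0 * oz c)).
  { rewrite Hab, Ec, ozpow_Zc, <- INR_IZR_INZ. reflexivity. }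
  pose proof (sqnorm_neq0_of_symp a0 b0 H0) as Ha0.
  assert (Ra : trivial_rot a).
  { apply (shifting_generators L a b c d a0); auto;
      try (apply conj_shifts_of_fix, conjg_of_commute; solve [auto | symmetry; auto]).
    exists (INR r0 * oz c). apply conjg_of_commg, Hcomm. }
  assert (Rb : trivial_rot b).
  { apply (shifting_generators L a b c d a0); auto;
      try (apply conj_shifts_of_fix, conjg_of_commute; solve [auto | symmetry; auto]).
    exists (- (INR r0 * oz c)). apply conjg_of_commg_r, Hcomm. }
  rewrite commg_trivial_rot in Hcomm by assumption. injection Hcomm as Hsymp.
  exact (conj Ra (conj Rb (conj Rd (conj Dx (conj Dy (conj Ec Hsymp)))))).
Qed.

Section T1_lattice.

Variables (L : osc -> Prop) (a b d : osc) (cz lam : R) (p q s : Z).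
Hypotheses (HL : is_subgroup L) (Hspan : spanned_by L a b (Zc cz) d)
  (La : L a) (Lb : L b) (Lc : L (Zc cz)) (Ld : L d)
  (Ra : trivial_rot a) (Rb : trivial_rot b) (Rd : trivial_rot d) (Dx : ox d = 0) (Dy : oy d = 0)
  (Hlam : 0 < lam) (Hp : ot a = IZR p * lam) (Hq : ot b = IZR q * lam) (Hs : ot d = IZR s * lam).

Let word i j k m := omul (hword a b (Zc cz) (i, j, k)) (ozpow d m).

Lemma T1_word_coords i j k m :
  L (word i j k m) /\
  ox (word i j k m) = IZR i * ox a + IZR j * ox b /\
  oy (word i j k m) = IZR i * oy a + IZR j * oy b /\
  ot (word i j k m) = IZR (i * p + j * q + m * s) * lam.
Proof.
  assert (Rc : trivial_rot (Zc cz)) by (apply trivial_rot_H; reflexivity).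
  destruct (word_coords a b (Zc cz) d i j k m Ra Rb Rc Rd) as (X & Y & T).
  split; [apply is_subgroup_word; assumption |].
  unfold word. rewrite X, Y, T, Dx, Dy, Hp, Hq, Hs, plus_IZR, plus_IZR, !mult_IZR.
  cbn [ox oy ot Zc]. repeat split; ring.
Qed.

Lemma T1_bezout (Hl : ot_lattice L lam) : exists i j m : Z, (i * p + j * q + m * s = 1)%Z.
Proof.
  destruct (ot_lattice_gen L lam Hl) as [x [Lx Tx]].
  destruct (Hspan x Lx) as [i [j [k [m ->]]]].
  destruct (T1_word_coords i j k m) as (_ & _ & _ & T). fold (word i j k m) in Tx.
  exists i, j, m. apply eq_IZR. apply (Rmult_eq_reg_r lam); lra.
Qed.

(* [a^s d^-p], [b^s d^-q] and [a^-q b^p] lie in [L cap H], with pairwise [symp] equal to [s p],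
   [s q] and [s^2] times [symp a b]; combine them with [i p + j q + m s = 1]. *)
Lemma T1_symp_int (Hn : normalised L) (Hl : ot_lattice L lam) :
  exists N : Z, IZR s * symp a b = IZR N.
Proof.
  destruct (T1_bezout Hl) as [i [j [m Hijm]]].
  assert (HLH : forall i j m, (i * p + j * q + m * s = 0)%Z -> LH L (word i j 0 m)).
  { intros i' j' m' E. destruct (T1_word_coords i' j' 0 m') as (Lw & _ & _ & T).
    split; [exact Lw | rewrite T, E; ring]. }
  destruct (T1_word_coords s 0 0 (- p)) as (_ & X1 & Y1 & _).
  destruct (T1_word_coords 0 s 0 (- q)) as (_ & X2 & Y2 & _).
  destruct (T1_word_coords (- q) p 0 0) as (_ & X3 & Y3 & _).
  destruct (symp_LH_int L (word s 0 0 (- p)) (word (- q) p 0 0)) as [n1 N1];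
    [exact Hn | apply HLH; lia .. |].
  destruct (symp_LH_int L (word 0 s 0 (- q)) (word (- q) p 0 0)) as [n2 N2];
    [exact Hn | apply HLH; lia .. |].
  destruct (symp_LH_int L (word s 0 0 (- p)) (word 0 s 0 (- q))) as [n3 N3];
    [exact Hn | apply HLH; lia .. |].
  unfold symp in N1, N2, N3. rewrite X1, Y1, X3, Y3 in N1. rewrite X2, Y2, X3, Y3 in N2.
  rewrite X1, Y1, X2, Y2 in N3.
  exists (i * n1 + j * n2 + m * n3)%Z.
  rewrite plus_IZR, plus_IZR, !mult_IZR, <- N1, <- N2, <- N3.
  transitivity (IZR (i * p + j * q + m * s) * (IZR s * symp a b)); [rewrite Hijm; ring |].
  rewrite plus_IZR, plus_IZR, !mult_IZR, opp_IZR. unfold symp. simpl. ring.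
Qed.

(* [Zc cz] and the generator [Zc w] of the centre of [L cap H] are powers of each other. *)
Lemma T1_center_scale r (Hn : normalised L) (Hh : heis_index L r)
  (Hab : symp a b <> 0) (Hcz : cz <> 0) (Hs0 : s <> 0%Z) :
  INR r * cz = 1 \/ INR r * cz = -1.
Proof.
  destruct (heis_center L r Hn Hh) as [w [Lw [Hw Hmult]]].
  destruct (Hmult cz (conj Lc eq_refl)) as [k1 E1].
  destruct (Hspan (Zc w) Lw) as [i [j [k [m Ew]]]]. change (Zc w = word i j k m) in Ew.
  destruct (T1_word_coords i j k m) as (_ & X & Y & T). rewrite <- Ew in X, Y, T.
  cbn [ox oy ot Zc] in X, Y, T.
  destruct (int_coords_zero i j (ox a) (oy a) (ox b) (oy b)) as [-> ->]; [lra | lra | exact Hab |].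
  assert (m = 0%Z) as ->.
  { replace (0 * p + 0 * q + m * s)%Z with (m * s)%Z in T by ring.
    assert (Hms : IZR (m * s) = 0) by (apply (Rmult_eq_reg_r lam); lra).
    apply eq_IZR in Hms. lia. }
  unfold word in Ew. rewrite hword_00, ozpow_Zc, omul_oone_r in Ew. injection Ew as E2.
  assert (Hk : (k1 * k = 1)%Z).
  { apply eq_IZR. rewrite mult_IZR. apply (Rmult_eq_reg_r cz); [| exact Hcz].
    rewrite Rmult_assoc, <- E2, <- E1. ring. }
  destruct (Z.eq_mul_1 k1 k Hk) as [-> | ->]; rewrite E1; destruct Hw;
    [left | right | right | left];
    simpl; lra.
Qed.

Lemma T1_Fu_delta_shift r r0 (Hn : normalised L) (Hh : heis_index L r) (Hl : ot_lattice L lam)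
  (Hr0 : (0 < r0)%nat) (Hab : symp a b = INR r0 * cz) (Hcz : cz <> 0) :
  exists K : Z, 1 / (INR r / INR r0 * INR r * lam) * ot d = IZR K * cz.
Proof.
  assert (Hr : 0 < INR r) by (apply lt_0_INR; apply Hh).
  assert (Hr0' : 0 < INR r0) by (apply lt_0_INR; exact Hr0).
  destruct (Z.eq_dec s 0) as [Hs0 | Hs0].
  { exists 0%Z. rewrite Hs, Hs0, !Rmult_0_l, Rmult_0_r. reflexivity. }
  assert (Hab0 : symp a b <> 0) by (rewrite Hab; apply Rmult_integral_contrapositive; split; lra).
  destruct (T1_symp_int Hn Hl) as [N HN].
  exists N. rewrite Hs, <- HN, Hab.
  destruct (T1_center_scale r Hn Hh Hab0 Hcz Hs0) as [E | E];
    [replace cz with (/ INR r) | replace cz with (- / INR r)];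
    try (field; lra); apply (Rmult_eq_reg_l (INR r)); try lra; rewrite E; field; lra.
Qed.

End T1_lattice.

Lemma unique_nf_gamma_neq_oone L a b c d :
  (forall x, L x <-> exists! p : Z * Z * Z * Z,
     x = match p with (i, j, k, m) => omul (hword a b c (i, j, k)) (ozpow d m) end) ->
  L c -> c <> oone.
Proof.
  intros Hnf Lc Ec. destruct (proj1 (Hnf c) Lc) as [p [_ Hu]].
  assert (P1 : p = (0, 0, 1, 0)%Z).
  { apply Hu. rewrite hword_00. simpl ozpow. rewrite !omul_oone_r. reflexivity. }
  assert (P0 : p = (0, 0, 0, 0)%Z).
  { apply Hu. rewrite hword_00. simpl ozpow. rewrite omul_oone_r. exact Ec. }
  rewrite P1 in P0. discriminate.
Qed.

Lemma image_Fu_conjg_trivial_rot L a b d u cz (K : Z) :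
  is_subgroup L -> spanned_by L a b (Zc cz) d -> L a -> L b -> L (Zc cz) -> L d ->
  trivial_rot a -> trivial_rot b -> trivial_rot d -> ox d = 0 -> oy d = 0 -> symp a b <> 0 ->
  u * ot d = IZR K * cz ->
  exists g, forall y, image (Fu u) L y <-> image (conjg g) L y.
Proof.
  intros HL Hspan La Lb Lc Ld Ra Rb Rd Dx Dy Hab HK.
  destruct (exists_symp_solution a b (u * ot a) (u * ot b) Hab) as [e1 [e2 [Sa Sb]]].
  exists (mkOsc e1 e2 0 0).
  assert (Gd : conjg (mkOsc e1 e2 0 0) d = d).
  { rewrite conjg_eta_trivial_rot by exact Rd. unfold symp. rewrite Dx, Dy. cbn [ox oy].
    replace (e1 * 0 - e2 * 0) with 0 by ring. apply shiftz_0. }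
  assert (Fd : Fu u d = shiftz d (IZR K * cz)) by (rewrite Fu_as_shiftz, HK; reflexivity).
  apply (image_eq_of_generators L a b (Zc cz) d); auto using conjg_hom, Fu_hom.
  - exists a. rewrite conjg_eta_trivial_rot, Sa by exact Ra. auto.
  - exists b. rewrite conjg_eta_trivial_rot, Sb by exact Rb. auto.
  - exists (Zc cz). rewrite conjg_Zc, Fu_H; auto.
  - exists (shiftz d (IZR K * cz)). split; [apply is_subgroup_shiftz; auto |].
    rewrite conjg_shiftz, Gd. exact Fd.
  - exists a. rewrite conjg_eta_trivial_rot, Sa by exact Ra. auto.
  - exists b. rewrite conjg_eta_trivial_rot, Sb by exact Rb. auto.
  - exists (Zc cz). rewrite conjg_Zc, Fu_H; auto.
  - exists (shiftz d (IZR (- K) * cz)). split; [apply is_subgroup_shiftz; auto |].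
    rewrite Gd, Fu_shiftz, Fd, shiftz_shiftz, opp_IZR.
    replace (IZR K * cz + - IZR K * cz) with 0 by ring. symmetry. apply shiftz_0.
Qed.

Lemma twisted_case_T1 L r lam r0 :
  is_lattice L -> normalised L -> heis_index L r -> 0 < lam -> ot_lattice L lam ->
  has_type L (T1 r0) r ->
  exists g, forall y, image (Fu (1 / (s0 (T1 r0) r * INR r * lam))) L y <-> image (conjg g) L y.
Proof.
  intros [HL _] Hn Hh Hlam Hl
    [Hr0 [_ [a [b [c [d [La [Lb [Lc [Ld [Eca [Ecb [Ecd [Hab [Hda [Hdb Hnf]]]]]]]]]]]]]]]].
  cbn [type_index S_images fst snd] in *.
  pose proof (spanned_of_unique_nf L a b c d Hnf) as Hspan.
  pose proof Hh as [Hr [a0 [b0 [c0 [Ha0 [Hb0 [Hc0 [_ [_ [Hab0 Hnf0]]]]]]]]]].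
  destruct (heis_generators L a0 b0 c0 r Hn Hr Ha0 Hb0 Hc0 Hab0) as [HI0 _].
  { intros x Hx. destruct (proj1 (Hnf0 x) Hx) as [p [Hp _]]. exists p. exact Hp. }
  destruct (T1_structure L a b c d a0 b0 r0 Hspan (proj1 Ha0) (proj1 Hb0) (proj2 Ha0) (proj2 Hb0))
    as (Ra & Rb & Rd & Dx & Dy & Ec & Hsymp); auto.
  { destruct HI0 as [-> | ->]; lra. }
  remember (oz c) as cz eqn:Hcz_def. clear Hcz_def. subst c.
  assert (Hcz : cz <> 0).
  { intro E0. apply (unique_nf_gamma_neq_oone L a b (Zc cz) d Hnf Lc). rewrite E0. reflexivity. }
  assert (Hab_neq : symp a b <> 0).
  { rewrite Hsymp. apply Rmult_integral_contrapositive. split; [apply not_0_INR; lia | exact Hcz]. }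
  destruct (ot_lattice_mem L lam a Hl La) as [p Hp].
  destruct (ot_lattice_mem L lam b Hl Lb) as [q Hq].
  destruct (ot_lattice_mem L lam d Hl Ld) as [s Hs].
  destruct (T1_Fu_delta_shift L a b d cz lam p q s HL Hspan La Lb Lc Ld Ra Rb Rd Dx Dy Hlam Hp Hq Hs
    r r0 Hn Hh Hl Hr0 Hsymp Hcz) as [K HK].
  exact (image_Fu_conjg_trivial_rot L a b d _ cz K HL Hspan La Lb Lc Ld Ra Rb Rd Dx Dy Hab_neq HK).
Qed.

Theorem lemma4p16 (L : osc -> Prop) (r : nat) (lam : R) (T : osc_type) :
  is_lattice L -> normalised L ->
  heis_index L r ->
  0 < lam ->
  (forall t, (exists x, L x /\ ot x = t) <-> exists n : Z, t = IZR n * lam) ->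
  has_type L T r ->
  exists g : osc, forall y,
    (exists x, L x /\ y = Fu (1 / (s0 T r * INR r * lam)) x) <->
    (exists x, L x /\ y = conjg g x).
Proof.
  intros Hlat Hn Hh Hlam Hl Ht.
  pose proof (untwisted_case L r lam T Hlat Hn Hh Hlam Hl) as Huntwisted.
  destruct T as [r0 | | | | | | |].
  - exact (twisted_case_T1 L r lam r0 Hlat Hn Hh Hlam Hl Ht).
  - apply Huntwisted. reflexivity.
  - exact (twisted_case_T2p L r lam Hlat Hn Hlam Hl Ht).
  - apply Huntwisted. reflexivity.
  - exact (twisted_case_T3p L r lam Hlat Hn Hlam Hl Ht).
  - destruct (Nat.eqb (Nat.modulo r 4) 2) eqn:E.
    + exact (twisted_case_T4 L r lam Hlat Hn Hlam Hl Ht E).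
    + apply Huntwisted. unfold s0. rewrite E. reflexivity.
  - destruct (Nat.eqb (Nat.modulo r 4) 2) eqn:E.
    + apply Huntwisted. unfold s0. rewrite E. reflexivity.
    + exact (twisted_case_T4p L r lam Hlat Hn Hlam Hl Ht E).
  - apply Huntwisted. reflexivity.
Qed.
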